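(* Let $0<p<1$ and let $k\ge 1$ be an integer. A coin showing heads with probability $p$ and tails with probability $1-p$ is flipped independently until $\mathrm{H}^k\mathrm{T}$ ($k$ heads followed by a tails) first appears as consecutive flips; let $Y$ be the number of flips. Then \[ E(Y) = \frac{1}{(1-p)p^k},\qquad E(Y^2) = \frac{2}{(1-p)^2 p^{2k}} - \frac{2k+1}{(1-p) p^k}, \] \[ E(Y^3) = \frac{6}{(1-p)^3 p^{3k}} - \frac{12k+6}{(1-p)^2 p^{2k}} + \frac{3k^2+3k+1}{(1-p) p^k}, \] \[ E(Y^4) = \frac{24}{(1-p)^4 p^{4k}} - \frac{72k+36}{(1-p)^3 p^{3k}} + \frac{48k^2+48k+14}{(1-p)^2 p^{2k}} - \frac{4k^3+6k^2+4k+1}{(1-p) p^k}, \] \[ E(Y^5) = \frac{120}{(1-p)^5 p^{5k}} - \frac{240(2k+1)}{(1-p)^4 p^{4k}} + \frac{30(18k^2+18k+5)}{(1-p)^3 p^{3k}} - \frac{10(16k^3+24k^2+14k+3)}{(1-p)^2 p^{2k}} + \frac{(k+1)^5-k^5}{(1-p) p^k}. \] *)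

From Stdlib Require Import Reals List Bool Arith.
From Coquelicot Require Import Coquelicot.
Open Scope R_scope.

(* A word of coin flips: true = heads (prob p), false = tails (prob 1-p). *)
Fixpoint words (n : nat) : list (list bool) :=
  match n with
  | O => nil :: nil
  | S n' => map (cons true) (words n') ++ map (cons false) (words n')
  end.

Definition weight (p : R) (w : list bool) : R :=
  fold_right Rmult 1 (map (fun b : bool => if b then p else 1 - p) w).

Definition pat (k : nat) : list bool := repeat true k ++ (false :: nil).

Definition list_bool_eqb (u v : list bool) : bool :=
  if list_eq_dec bool_dec u v then true else false.

Definition ends_with_pat (k : nat) (w : list bool) : bool :=
  Nat.leb (S k) (length w) &&
  list_bool_eqb (skipn (length w - S k) w) (pat k).

Definition first_hit (k : nat) (w : list bool) : bool :=
  ends_with_pat k w &&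
  forallb (fun j => negb (ends_with_pat k (firstn j w))) (seq 0 (length w)).

Definition probY (p : R) (k n : nat) : R :=
  fold_right Rplus 0 (map (weight p) (filter (first_hit k) (words n))).

Definition moment_is (p : R) (k m : nat) (l : R) : Prop :=
  is_series (fun n : nat => (INR n) ^ m * probY p k n) l.

Example first_hit_ex : first_hit 1 (false :: true :: true :: false :: nil) = true.
Proof. reflexivity. Qed.
Example first_hit_ex2 : first_hit 1 (true :: false :: true :: false :: nil) = false.
Proof. reflexivity. Qed.

(* Write T(n) = P(Y > n) and q = (1 - p) p^k.  Splitting on the last flip gives
   P(Y = n + 1) = T(n) - T(n + 1); and Y = n + k + 1 exactly when the first n flips
   avoid the pattern and the next k + 1 flips spell H^k T, so P(Y = n + k + 1) = q T(n).
   Summing n^m P(Y = n) in these two ways expresses E(Y^m) through the tail moments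
   S_j = sum_n n^j T(n): E(Y^(m+1)) = sum_(j<=m) C(m+1,j) S_j by summation by parts, and
   E(Y^m) = q sum_(j<=m) C(m,j) (k+1)^(m-j) S_j by the renewal identity.  Equating the two
   determines S_0 = 1/q, S_1, S_2, ... recursively.  All series converge because
   T(n + 1) <= (1 - q) T(n) once n >= k. *)

From Stdlib Require Import Reals List Arith Lia Lra Bool.
From Coquelicot Require Import Coquelicot.
Open Scope R_scope.

Definition lsum {A : Type} (f : A -> R) (l : list A) : R := fold_right Rplus 0 (map f l).

Section ListSum.
Context {A : Type}.
Implicit Types (f g : A -> R) (l : list A).

Lemma lsum_app f l1 l2 : lsum f (l1 ++ l2) = lsum f l1 + lsum f l2.
Proof. unfold lsum; induction l1 as [|x l1 IH]; simpl; [|rewrite IH]; lra. Qed.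

Lemma lsum_ext_in f g l : (forall x, In x l -> f x = g x) -> lsum f l = lsum g l.
Proof.
  unfold lsum; induction l as [|x l IH]; simpl; intros Efg; [easy|].
  rewrite Efg, IH; auto.
Qed.

Lemma lsum_eq0 f l : (forall x, In x l -> f x = 0) -> lsum f l = 0.
Proof.
  intros E0; rewrite (lsum_ext_in f (fun _ => 0)) by exact E0; clear E0.
  unfold lsum; induction l as [|x l IH]; simpl; [|rewrite IH]; lra.
Qed.

Lemma lsum_plus f g l : lsum (fun x => f x + g x) l = lsum f l + lsum g l.
Proof. unfold lsum; induction l as [|x l IH]; simpl; [|rewrite IH]; lra. Qed.

Lemma lsum_scal c f l : lsum (fun x => c * f x) l = c * lsum f l.
Proof. unfold lsum; induction l as [|x l IH]; simpl; [|rewrite IH]; lra. Qed.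

Lemma lsum_nonneg f l : (forall x, 0 <= f x) -> 0 <= lsum f l.
Proof.
  unfold lsum; intros Hf; induction l as [|x l IH]; simpl; [lra|].
  specialize (Hf x); lra.
Qed.

Lemma lsum_filter f (P : A -> bool) l :
  lsum f (filter P l) = lsum (fun x => if P x then f x else 0) l.
Proof.
  unfold lsum; induction l as [|x l IH]; simpl; [easy|].
  destruct (P x); simpl; rewrite IH; lra.
Qed.

End ListSum.

Lemma lsum_words_S (f : list bool -> R) n :
  lsum f (words (S n)) =
  lsum (fun w => f (true :: w)) (words n) + lsum (fun w => f (false :: w)) (words n).
Proof. simpl; rewrite lsum_app; unfold lsum; rewrite !map_map; reflexivity. Qed.

Lemma lsum_words_add (f : list bool -> R) m j :
  lsum f (words (m + j)) = lsum (fun u => lsum (fun v => f (u ++ v)) (words j)) (words m).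
Proof.
  revert f; induction m as [|m IH]; intros f.
  - unfold lsum at 2; simpl; rewrite Rplus_0_r; reflexivity.
  - change (S m + j)%nat with (S (m + j)); rewrite !lsum_words_S, !IH; reflexivity.
Qed.

Lemma length_in_words n w : In w (words n) -> length w = n.
Proof.
  revert w; induction n as [|n IH]; simpl; intros w Hw.
  - destruct Hw as [<-|[]]; reflexivity.
  - apply in_app_or in Hw as [Hw|Hw]; apply in_map_iff in Hw as [u [<- Hu]];
      simpl; rewrite (IH u Hu); reflexivity.
Qed.

Lemma list_bool_eqb_true u v : list_bool_eqb u v = true <-> u = v.
Proof. unfold list_bool_eqb; destruct (list_eq_dec bool_dec u v); split; congruence. Qed.

Lemma list_bool_eqb_cons b c u v :
  list_bool_eqb (b :: u) (c :: v) = Bool.eqb b c && list_bool_eqb u v.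
Proof.
  apply eq_iff_eq_true; rewrite andb_true_iff, !list_bool_eqb_true, eqb_true_iff.
  split; [intros [= -> ->]|intros [-> ->]]; auto.
Qed.

Lemma lsum_words_at (f : list bool -> R) w0 :
  lsum (fun v => if list_bool_eqb v w0 then f v else 0) (words (length w0)) = f w0.
Proof.
  revert f; induction w0 as [|c w0 IH]; intros f.
  - unfold lsum; simpl; lra.
  - change (length (c :: w0)) with (S (length w0)); rewrite lsum_words_S.
    assert (Hcons : forall b v,
      (if list_bool_eqb (b :: v) (c :: w0) then f (b :: v) else 0) =
      if Bool.eqb b c then (if list_bool_eqb v w0 then f (b :: v) else 0) else 0).
    { intros b v; rewrite list_bool_eqb_cons; destruct (Bool.eqb b c); reflexivity. }
    rewrite (lsum_ext_in _ _ _ (fun v _ => Hcons true v)),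
      (lsum_ext_in _ _ _ (fun v _ => Hcons false v)).
    destruct c; simpl.
    + rewrite (IH (fun v => f (true :: v))), lsum_eq0 by reflexivity; lra.
    + rewrite (IH (fun v => f (false :: v))), lsum_eq0 by reflexivity; lra.
Qed.

Lemma weight_app p u v : weight p (u ++ v) = weight p u * weight p v.
Proof. unfold weight; induction u as [|b u IH]; simpl; [|rewrite IH]; lra. Qed.

Lemma weight_snoc p u b : weight p (u ++ b :: nil) = weight p u * (if b then p else 1 - p).
Proof. rewrite weight_app; unfold weight at 2; simpl; lra. Qed.

Lemma weight_nonneg p w : 0 <= p <= 1 -> 0 <= weight p w.
Proof.
  intros Hp; unfold weight; induction w as [|b w IH]; simpl; [lra|].
  apply Rmult_le_pos; [destruct b; lra|exact IH].
Qed.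

Lemma weight_pat p k : weight p (pat k) = (1 - p) * p ^ k.
Proof.
  assert (Hheads : weight p (repeat true k) = p ^ k).
  { induction k as [|k IH]; [reflexivity|].
    unfold weight in *; simpl in *; rewrite IH; reflexivity. }
  unfold pat; rewrite weight_app, Hheads; unfold weight; simpl; lra.
Qed.

Lemma forallb_ext_in {A : Type} (f g : A -> bool) l :
  (forall x, In x l -> f x = g x) -> forallb f l = forallb g l.
Proof. induction l as [|x l IH]; simpl; intros Efg; [easy|]; rewrite Efg, IH; auto. Qed.

Section Pattern.
Variable k : nat.

Definition avoids (w : list bool) : bool :=
  forallb (fun j => negb (ends_with_pat k (firstn j w))) (seq 0 (S (length w))).

Lemma ends_with_pat_app u v :
  length v = S k -> ends_with_pat k (u ++ v) = list_bool_eqb v (pat k).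
Proof.
  intros Hv; unfold ends_with_pat; rewrite length_app, Hv.
  replace (Nat.leb (S k) (length u + S k)) with true by (symmetry; apply Nat.leb_le; lia).
  replace (length u + S k - S k)%nat with (length u) by lia.
  rewrite skipn_app, skipn_all, Nat.sub_diag; reflexivity.
Qed.

Lemma ends_with_pat_snoc_true w : ends_with_pat k (w ++ true :: nil) = false.
Proof.
  destruct (ends_with_pat k (w ++ true :: nil)) eqn:E; [|reflexivity].
  unfold ends_with_pat in E; apply andb_prop in E as [_ E]; apply list_bool_eqb_true in E.
  pose proof (firstn_skipn (length (w ++ true :: nil) - S k) (w ++ true :: nil)) as F.
  rewrite E in F; unfold pat in F; rewrite app_assoc in F.
  apply app_inj_tail in F as [_ F]; discriminate.
Qed.

Lemma first_hit_short w : (length w <= k)%nat -> first_hit k w = false.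
Proof.
  intros Hw; unfold first_hit, ends_with_pat.
  replace (Nat.leb (S k) (length w)) with false by (symmetry; apply Nat.leb_gt; lia).
  reflexivity.
Qed.

Lemma avoids_prefixes_snoc u b :
  forallb (fun j => negb (ends_with_pat k (firstn j (u ++ b :: nil)))) (seq 0 (S (length u)))
  = avoids u.
Proof.
  apply forallb_ext_in; intros j Hj; apply in_seq in Hj.
  rewrite firstn_app; replace (j - length u)%nat with 0%nat by lia.
  rewrite app_nil_r; reflexivity.
Qed.

Lemma first_hit_snoc u b :
  first_hit k (u ++ b :: nil) = ends_with_pat k (u ++ b :: nil) && avoids u.
Proof.
  unfold first_hit; rewrite length_app, Nat.add_1_r, avoids_prefixes_snoc; reflexivity.
Qed.

Lemma avoids_snoc u b :
  avoids (u ++ b :: nil) = avoids u && negb (ends_with_pat k (u ++ b :: nil)).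
Proof.
  unfold avoids at 1; rewrite length_app, Nat.add_1_r, seq_S, forallb_app.
  rewrite avoids_prefixes_snoc; cbn [forallb Nat.add].
  rewrite firstn_all2 by (rewrite length_app; simpl; lia).
  rewrite andb_true_r; reflexivity.
Qed.

Lemma avoids_app_heads u i : avoids (u ++ repeat true i) = avoids u.
Proof.
  induction i as [|i IH]; simpl; [rewrite app_nil_r; reflexivity|].
  rewrite repeat_cons, app_assoc, avoids_snoc, ends_with_pat_snoc_true, IH.
  apply andb_true_r.
Qed.

Lemma first_hit_app_pat u v :
  length v = S k -> first_hit k (u ++ v) = avoids u && list_bool_eqb v (pat k).
Proof.
  intros Hv; destruct (list_bool_eqb v (pat k)) eqn:E.
  - apply list_bool_eqb_true in E; subst v.
    assert (Hpat : list_bool_eqb (pat k) (pat k) = true) by (apply list_bool_eqb_true; reflexivity).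
    rewrite andb_true_r; unfold pat at 1; rewrite app_assoc, first_hit_snoc, <- app_assoc.
    fold (pat k); rewrite ends_with_pat_app, Hpat, avoids_app_heads by exact Hv.
    reflexivity.
  - unfold first_hit; rewrite ends_with_pat_app, E by exact Hv.
    rewrite andb_false_r; reflexivity.
Qed.

End Pattern.

Section FirstHit.
Variables (p : R) (k : nat).

Definition prob_words (P : list bool -> bool) (n : nat) : R :=
  lsum (fun w => if P w then weight p w else 0) (words n).

(* T(n) = P(Y > n). *)
Definition tail_prob (n : nat) : R := prob_words (avoids k) n.

Lemma probY_prob_words n : probY p k n = prob_words (first_hit k) n.
Proof. exact (lsum_filter (weight p) (first_hit k) (words n)). Qed.

Lemma tail_prob_0 : tail_prob 0 = 1.
Proof. unfold tail_prob, prob_words, lsum, weight; simpl; lra. Qed.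

Lemma probY_S n : probY p k (S n) = tail_prob n - tail_prob (S n).
Proof.
  enough (probY p k (S n) + tail_prob (S n) = tail_prob n) by lra.
  rewrite probY_prob_words; unfold tail_prob, prob_words.
  rewrite <- Nat.add_1_r, !lsum_words_add, <- lsum_plus.
  apply lsum_ext_in; intros u _; unfold lsum; simpl.
  rewrite !first_hit_snoc, !avoids_snoc, !weight_snoc.
  destruct (avoids k u), (ends_with_pat k (u ++ true :: nil)),
    (ends_with_pat k (u ++ false :: nil)); simpl; ring.
Qed.

Lemma probY_renewal n : probY p k (n + S k) = (1 - p) * p ^ k * tail_prob n.
Proof.
  rewrite probY_prob_words; unfold tail_prob, prob_words.
  rewrite lsum_words_add, <- lsum_scal; apply lsum_ext_in; intros u _.
  assert (Hpat : length (pat k) = S k)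
    by (unfold pat; rewrite length_app, repeat_length; simpl; lia).
  transitivity (lsum (fun v => if list_bool_eqb v (pat k)
                                then if avoids k u then weight p (u ++ v) else 0 else 0)
                     (words (length (pat k)))).
  - rewrite Hpat; apply lsum_ext_in; intros v Hv; apply length_in_words in Hv.
    rewrite first_hit_app_pat by exact Hv.
    destruct (avoids k u), (list_bool_eqb v (pat k)); reflexivity.
  - rewrite lsum_words_at, weight_app, weight_pat; destruct (avoids k u); ring.
Qed.

Lemma probY_short n : (n <= k)%nat -> probY p k n = 0.
Proof.
  intros Hn; rewrite probY_prob_words; apply lsum_eq0; intros w Hw.
  rewrite first_hit_short by (rewrite (length_in_words n w Hw); exact Hn); reflexivity.
Qed.

Hypothesis Hp : 0 < p < 1.

Lemma prob_words_nonneg P n : 0 <= prob_words P n.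
Proof.
  apply lsum_nonneg; intros w; destruct (P w); [apply weight_nonneg; lra|lra].
Qed.

Lemma tail_prob_antimono m n : (m <= n)%nat -> tail_prob n <= tail_prob m.
Proof.
  induction 1 as [|n _ IH]; [lra|].
  pose proof (prob_words_nonneg (first_hit k) (S n)) as Ha.
  rewrite <- probY_prob_words, probY_S in Ha; lra.
Qed.

Lemma pat_prob_bounds : 0 < (1 - p) * p ^ k < 1.
Proof.
  pose proof (pow_lt p k ltac:(lra)) as Hpk.
  assert (p ^ k <= 1) by (rewrite <- (pow1 k); apply pow_incr; lra).
  split; nra.
Qed.

(* T(n + 1) = T(n) - q T(n - k) by the renewal identity, and T(n - k) >= T(n). *)
Lemma tail_prob_S_contract n :
  (k <= n)%nat -> tail_prob (S n) <= (1 - (1 - p) * p ^ k) * tail_prob n.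
Proof.
  intros Hkn.
  pose proof (probY_S n) as Hstep.
  replace (S n) with ((n - k) + S k)%nat in Hstep at 1 by lia.
  rewrite probY_renewal in Hstep.
  pose proof (tail_prob_antimono (n - k) n ltac:(lia)).
  pose proof pat_prob_bounds; nra.
Qed.

Lemma tail_prob_geometric n :
  tail_prob n <= (1 - (1 - p) * p ^ k) ^ n / (1 - (1 - p) * p ^ k) ^ k.
Proof.
  pose proof pat_prob_bounds; set (r := 1 - (1 - p) * p ^ k).
  assert (Hrk : 0 < r ^ k) by (apply pow_lt; unfold r; lra).
  destruct (Nat.le_gt_cases k n) as [Hkn|Hnk].
  - induction Hkn as [|n Hkn IH].
    + unfold Rdiv; rewrite Rinv_r by lra.
      pose proof (tail_prob_antimono 0 k ltac:(lia)); rewrite tail_prob_0 in *; lra.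
    + pose proof (tail_prob_S_contract n Hkn) as Hcontr; fold r in Hcontr.
      assert (0 <= r) by (unfold r; lra).
      apply Rle_trans with (r * tail_prob n); [exact Hcontr|].
      unfold Rdiv in *; simpl; rewrite Rmult_assoc; apply Rmult_le_compat_l; assumption.
  - apply Rle_trans with 1.
    + pose proof (tail_prob_antimono 0 n ltac:(lia)); rewrite tail_prob_0 in *; lra.
    + apply Rmult_le_reg_r with (r ^ k); [exact Hrk|].
      unfold Rdiv; rewrite Rmult_assoc, Rinv_l, Rmult_1_l, Rmult_1_r by lra.
      replace k with (n + (k - n))%nat by lia; rewrite pow_add.
      assert (0 <= r ^ (k - n) <= 1) by
        (split; [apply pow_le|rewrite <- (pow1 (k - n)); apply pow_incr]; unfold r; lra).
      pose proof (pow_lt r n ltac:(unfold r; lra)); nra.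
Qed.

End FirstHit.

Lemma is_lim_seq_inv_S : is_lim_seq (fun n => / (INR n + 1)) 0.
Proof.
  assert (H : is_lim_seq (fun n => INR (S n)) p_infty)
    by exact (proj1 (is_lim_seq_incr_1 INR p_infty) is_lim_seq_INR).
  apply is_lim_seq_inv in H; [|discriminate].
  apply is_lim_seq_ext with (fun n => / INR (S n)); [intros n; rewrite S_INR; reflexivity|exact H].
Qed.

Lemma ex_series_pow_geom j r : 0 < r < 1 -> ex_series (fun n => INR n ^ j * r ^ n).
Proof.
  intros Hr.
  (* Ratio test on a dominating series without zero terms. *)
  set (b n := (INR n + 1) ^ j * r ^ n).
  assert (Hb : forall n, 0 < b n)
    by (intros n; apply Rmult_lt_0_compat; apply pow_lt; pose proof (pos_INR n); lra).
  apply (@ex_series_le R_AbsRing R_CompleteNormedModule _ (fun n => Rabs (b n))).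
  - intros n; pose proof (pos_INR n); unfold norm; simpl; unfold abs; simpl.
    rewrite !Rabs_pos_eq by (apply Rmult_le_pos; apply pow_le; lra).
    apply Rmult_le_compat_r; [apply pow_le; lra|apply pow_incr; lra].
  - apply ex_series_DAlembert with r; [lra|intros n; specialize (Hb n); lra|].
    apply is_lim_seq_ext with (fun n => (1 + / (INR n + 1)) ^ j * r).
    + intros n; pose proof (pos_INR n).
      rewrite Rabs_pos_eq by (apply Rlt_le, Rdiv_lt_0_compat; apply Hb).
      unfold b; rewrite S_INR; simpl pow.
      replace (INR n + 1 + 1) with ((1 + / (INR n + 1)) * (INR n + 1)) by (field; lra).
      rewrite Rpow_mult_distr; field; split; apply pow_nonzero; lra.
    + assert (Hc := is_lim_seq_continuous (fun x => (1 + x) ^ j * r) _ 0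
                        ltac:(reg) is_lim_seq_inv_S).
      cbv beta in Hc; rewrite Rplus_0_r, pow1, Rmult_1_l in Hc; exact Hc.
Qed.

Lemma is_series_sum_f_R0 (a : nat -> nat -> R) (l : nat -> R) m :
  (forall j, (j <= m)%nat -> is_series (a j) (l j)) ->
  is_series (fun n => sum_f_R0 (fun j => a j n) m) (sum_f_R0 l m).
Proof.
  induction m as [|m IH]; intros Ha; simpl; [apply Ha; lia|].
  apply (is_series_plus (V := R_NormedModule)); [apply IH; intros j Hj|]; apply Ha; lia.
Qed.

(* [is_series_ext] with the pointwise equations stated in [R], where [ring] applies. *)
Lemma is_series_Rext (a b : nat -> R) l :
  (forall n, a n = b n) -> is_series a l -> is_series b l.
Proof. apply is_series_ext. Qed.

Lemma moment_is_unique p k m l l' : moment_is p k m l -> moment_is p k m l' -> l = l'.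
Proof. intros Hl Hl'; rewrite <- (is_series_unique _ _ Hl); exact (is_series_unique _ _ Hl'). Qed.

Section Moments.
Variables (p : R) (k : nat).
Hypothesis Hp : 0 < p < 1.

Lemma ex_series_tail_moment j : ex_series (fun n => INR n ^ j * tail_prob p k n).
Proof.
  pose proof (pat_prob_bounds p k Hp); set (r := 1 - (1 - p) * p ^ k).
  apply (@ex_series_le R_AbsRing R_CompleteNormedModule _
           (fun n => / r ^ k * (INR n ^ j * r ^ n))).
  - intros n; pose proof (pos_INR n); unfold norm; simpl; unfold abs; simpl.
    assert (0 <= INR n ^ j) by (apply pow_le; lra).
    pose proof (prob_words_nonneg p Hp (avoids k) n) as Htail; fold (tail_prob p k n) in Htail.
    pose proof (tail_prob_geometric p k Hp n) as Hgeom; fold r in Hgeom.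
    rewrite Rabs_pos_eq by (apply Rmult_le_pos; lra).
    unfold Rdiv in Hgeom; nra.
  - apply (ex_series_scal_l (V := R_NormedModule)), ex_series_pow_geom; unfold r; lra.
Qed.

Definition tail_moment (j : nat) : R := Series (fun n => INR n ^ j * tail_prob p k n).

Lemma is_series_tail_moment j :
  is_series (fun n => INR n ^ j * tail_prob p k n) (tail_moment j).
Proof. exact (Series_correct _ (ex_series_tail_moment j)). Qed.

Lemma is_series_shifted_moment c m :
  is_series (fun n => (INR n + c) ^ m * tail_prob p k n)
            (sum_f_R0 (fun j => Binomial.C m j * c ^ (m - j) * tail_moment j) m).
Proof.
  apply is_series_Rext with
    (fun n => sum_f_R0 (fun j => Binomial.C m j * c ^ (m - j) * (INR n ^ j * tail_prob p k n)) m).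
  - intros n; rewrite binomial, Rmult_comm, scal_sum; apply sum_eq; intros j _; ring.
  - apply is_series_sum_f_R0; intros j _.
    exact (is_series_scal (V := R_NormedModule) _ _ _ (is_series_tail_moment j)).
Qed.

Lemma is_series_probY_by_parts (f : nat -> R) l l' :
  is_series (fun n => f (S n) * tail_prob p k n) l ->
  is_series (fun n => f n * tail_prob p k n) l' ->
  is_series (fun n => f n * probY p k n) (l - l' + f 0%nat).
Proof.
  intros Hl Hl'.
  assert (Hl'S : is_series (fun n => f (S n) * tail_prob p k (S n)) (l' - f 0%nat)).
  { apply (is_series_incr_1 (fun n => f n * tail_prob p k n)).
    assert (E : l' - f 0%nat + f 0%nat * tail_prob p k 0 = l')
      by (rewrite tail_prob_0; ring).
    change plus with Rplus; rewrite E; exact Hl'. }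
  apply is_series_decr_1.
  assert (E : l - l' + f 0%nat + - (f 0%nat * probY p k 0) = l - (l' - f 0%nat))
    by (rewrite probY_short by lia; ring).
  change plus with Rplus; change opp with Ropp; rewrite E.
  apply is_series_Rext with (fun n => f (S n) * tail_prob p k n - f (S n) * tail_prob p k (S n)).
  - intros n; rewrite probY_S; ring.
  - exact (is_series_minus (V := R_NormedModule) _ _ _ _ Hl Hl'S).
Qed.

Lemma is_series_probY_renewal (f : nat -> R) l :
  is_series (fun n => f (n + S k)%nat * tail_prob p k n) l ->
  is_series (fun n => f n * probY p k n) ((1 - p) * p ^ k * l).
Proof.
  intros Hl.
  apply (is_series_decr_n _ (S k)); [lia|].
  rewrite (sum_n_ext_loc _ (fun _ => 0)) by (intros n Hn; rewrite probY_short by lia; apply Rmult_0_r).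
  assert (E : (1 - p) * p ^ k * l + - sum_n (fun _ => 0) k = (1 - p) * p ^ k * l)
    by (rewrite sum_n_const; ring).
  change plus with Rplus; change opp with Ropp; change (Nat.pred (S k)) with k; rewrite E.
  apply is_series_Rext with (fun n => (1 - p) * p ^ k * (f (n + S k)%nat * tail_prob p k n)).
  - intros n; rewrite (Nat.add_comm (S k) n), probY_renewal; ring.
  - exact (is_series_scal (V := R_NormedModule) _ _ _ Hl).
Qed.

Lemma moment_0 : moment_is p k 0 1.
Proof.
  replace 1 with (tail_moment 0 - tail_moment 0 + 1) by ring.
  exact (is_series_probY_by_parts (fun _ => 1) _ _
           (is_series_tail_moment 0) (is_series_tail_moment 0)).
Qed.

Lemma moment_succ m :
  moment_is p k (S m) (sum_f_R0 (fun j => Binomial.C (S m) j * tail_moment j) m).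
Proof.
  assert (Hshift : is_series (fun n => INR (S n) ^ S m * tail_prob p k n)
            (sum_f_R0 (fun j => Binomial.C (S m) j * 1 ^ (S m - j) * tail_moment j) (S m))).
  { apply is_series_Rext with (fun n => (INR n + 1) ^ S m * tail_prob p k n).
    - intros n; rewrite S_INR; reflexivity.
    - apply is_series_shifted_moment. }
  assert (E : sum_f_R0 (fun j => Binomial.C (S m) j * 1 ^ (S m - j) * tail_moment j) (S m)
              - tail_moment (S m) + INR 0 ^ S m
              = sum_f_R0 (fun j => Binomial.C (S m) j * tail_moment j) m).
  { rewrite tech5, C_n_n, Nat.sub_diag; simpl INR.
    rewrite (sum_eq _ (fun j => Binomial.C (S m) j * tail_moment j))
      by (intros j _; rewrite pow1; ring).
    simpl; ring. }
  unfold moment_is; rewrite <- E.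
  exact (is_series_probY_by_parts (fun n => INR n ^ S m) _ _ Hshift (is_series_tail_moment (S m))).
Qed.

Lemma moment_renewal m :
  moment_is p k m ((1 - p) * p ^ k *
    sum_f_R0 (fun j => Binomial.C m j * (INR k + 1) ^ (m - j) * tail_moment j) m).
Proof.
  apply is_series_probY_renewal.
  apply is_series_Rext with (fun n => (INR n + (INR k + 1)) ^ m * tail_prob p k n).
  - intros n; rewrite plus_INR, S_INR; reflexivity.
  - apply is_series_shifted_moment.
Qed.

Lemma tail_moment_0 : tail_moment 0 = / ((1 - p) * p ^ k).
Proof.
  pose proof (moment_is_unique _ _ _ _ _ moment_0 (moment_renewal 0)) as E.
  pose proof (pat_prob_bounds p k Hp).
  simpl in E; rewrite C_n_n, !Rmult_1_l in E.
  apply (Rmult_eq_reg_l ((1 - p) * p ^ k)); [|lra].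
  rewrite Rinv_r by lra; symmetry; exact E.
Qed.

Lemma tail_moment_S m :
  tail_moment (S m) =
  sum_f_R0 (fun j => Binomial.C (S m) j * tail_moment j) m / ((1 - p) * p ^ k)
  - sum_f_R0 (fun j => Binomial.C (S m) j * (INR k + 1) ^ (S m - j) * tail_moment j) m.
Proof.
  pose proof (moment_is_unique _ _ _ _ _ (moment_succ m) (moment_renewal (S m))) as E.
  pose proof (pat_prob_bounds p k Hp).
  rewrite tech5, C_n_n, Nat.sub_diag in E.
  set (q := (1 - p) * p ^ k) in *; rewrite E; field; lra.
Qed.

End Moments.

Ltac expand_binomial_sums :=
  unfold Binomial.C in *; simpl sum_f_R0 in *; simpl Factorial.fact in *; simpl minus in *;
  rewrite ?INR_IZR_INZ in *; simpl Z.of_nat in *.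

Theorem corollary3p5 (p : R) (k : nat) :
  0 < p < 1 -> (1 <= k)%nat ->
  let q := (1 - p) * p ^ k in
  let K := INR k in
  moment_is p k 1 (1 / q) /\
  moment_is p k 2 (2 / q ^ 2 - (2 * K + 1) / q) /\
  moment_is p k 3 (6 / q ^ 3 - (12 * K + 6) / q ^ 2
                   + (3 * K ^ 2 + 3 * K + 1) / q) /\
  moment_is p k 4 (24 / q ^ 4 - (72 * K + 36) / q ^ 3
                   + (48 * K ^ 2 + 48 * K + 14) / q ^ 2
                   - (4 * K ^ 3 + 6 * K ^ 2 + 4 * K + 1) / q) /\
  moment_is p k 5 (120 / q ^ 5 - 240 * (2 * K + 1) / q ^ 4
                   + 30 * (18 * K ^ 2 + 18 * K + 5) / q ^ 3
                   - 10 * (16 * K ^ 3 + 24 * K ^ 2 + 14 * K + 3) / q ^ 2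
                   + ((K + 1) ^ 5 - K ^ 5) / q).
Proof.
  intros Hp _ q K.
  assert (Hq : q <> 0) by (pose proof (pat_prob_bounds p k Hp); unfold q; lra).
  pose proof (tail_moment_0 p k Hp) as S0.
  pose proof (tail_moment_S p k Hp 0) as S1.
  pose proof (tail_moment_S p k Hp 1) as S2.
  pose proof (tail_moment_S p k Hp 2) as S3.
  pose proof (tail_moment_S p k Hp 3) as S4.
  fold q K in S0, S1, S2, S3, S4; expand_binomial_sums.
  rewrite S0 in S1; rewrite S0, S1 in S2; rewrite S0, S1, S2 in S3; rewrite S0, S1, S2, S3 in S4.
  repeat split; lazymatch goal with
    |- moment_is _ _ (S ?m) ?v =>
      replace v with (sum_f_R0 (fun j => Binomial.C (S m) j * tail_moment p k j) m);
      [apply moment_succ, Hp|]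
  end.
  all: expand_binomial_sums; rewrite ?S0, ?S1, ?S2, ?S3, ?S4; field; exact Hq.
Qed.
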